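(* Let $\tau>0$, let $W:\mathbb{R}^n\to\mathbb{R}$ be a continuous positive definite function, and let $V:\mathbb{R}^n\to\mathbb{R}$ be a continuous function for which there exist class-$\mathcal{K}_\infty$ functions $\kappa_1,\kappa_2$ with $\kappa_1(|x|)\le V(x)\le\kappa_2(|x|)$ for all $x\in\mathbb{R}^n$. Then there exist a function $K_c$ of class $\mathcal{K}_\infty$ and a function $K_d$, positive, continuous and increasing on $[0,+\infty)$, such that for all $x\in\mathbb{R}^n$ and all $z\ge0$, $$\frac{K_c(V(x)+z)}{K_d(V(x)+z)}\le\frac12W(x)+\frac{1}{4\tau}z.$$
   Context: $|\cdot|$ is the Euclidean norm. A class-$\mathcal{K}_\infty$ function is a continuous function $[0,\infty)\to[0,\infty)$ that is zero at zero, strictly increasing and unbounded. *)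

From HB Require Import structures.
From mathcomp Require Import all_boot all_order all_algebra.
From mathcomp Require Import all_classical all_reals all_analysis.
Set Implicit Arguments. Unset Strict Implicit. Unset Printing Implicit Defensive.
Import Order.TTheory GRing.Theory Num.Theory.
Import numFieldNormedType.Exports.
Local Open Scope ring_scope.
Local Open Scope classical_set_scope.

Definition eucl_norm {R : realType} {n : nat} (x : 'rV[R]_n) : R :=
  Num.sqrt (\sum_(i < n) x ord0 i ^+ 2).

Definition class_Kinf {R : realType} (k : R -> R) : Prop :=
  {within `[0, +oo[, continuous k} /\
  k 0 = 0 /\
  (forall s t : R, 0 <= s -> s < t -> k s < k t) /\
  (forall s : R, 0 <= s -> 0 <= k s) /\
  (forall M : R, exists s : R, 0 <= s /\ M < k s).

Definition pos_def {R : realType} {n : nat} (W : 'rV[R]_n -> R) : Prop :=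
  W 0 = 0 /\ forall x, x != 0 -> 0 < W x.

From HB Require Import structures.
From mathcomp Require Import all_boot all_order all_algebra.
From mathcomp Require Import all_classical all_reals all_analysis.
From mathcomp Require Import lra ring.
Import Order.TTheory GRing.Theory Num.Theory.
Import numFieldNormedType.Exports.
Local Open Scope ring_scope.
Local Open Scope classical_set_scope.

(* Write g(x, z) = W(x)/2 + z/(4 tau) for the right-hand side.  On every band
   a <= V x <= b with a > 0 the function W is bounded below by a positive
   constant, since the band is compact (V is bounded below by k1(|x|)) and
   avoids the origin.  The lower envelopes
     e1(s) = inf { min(1, g(x, z) + max(s - V x - z, 0)) | z >= 0, V x <= 1 },
     e2(s) = inf { min(1, g(x, z) + max(V x + z - s, 0)) | z >= 0, V x >= 1 }
   are therefore 1-Lipschitz, e1 is nondecreasing and positive on (0, oo), e2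
   is nonincreasing and positive, and e1(V x + z) resp. e2(V x + z) is at most
   g(x, z) according as V x <= 1 or V x >= 1.  The penalty terms make the
   envelopes monotone; splitting at V x = 1 keeps V bounded where positivity
   has to be read off a band (W need not be bounded below at infinity).
   Then Kc(s) = s e1(s) / (1 + e1(s)) and Kd(s) = (1 + s) / e2(s) work, as
   Kc / Kd <= min(e1, e2). *)

Lemma lip1_continuous {R : realFieldType} (g : R -> R) :
  (forall s t, g s <= g t + `|s - t|) -> continuous g.
Proof.
move=> g_lip x; apply/cvgrPdist_lt => e e_gt0; near=> y.
have gxy := g_lip x y; have gyx := g_lip y x; rewrite distrC in gyx.
have : `|x - y| < e by near: y; exact: (@near_ball _ _ x e e_gt0).
by move=> xy_e; rewrite ltr_norml; apply/andP; split; lra.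
Unshelve. all: by end_near.
Qed.

Lemma max0_lip {R : realFieldType} (a b : R) :
  Num.max a 0 <= Num.max b 0 + `|a - b|.
Proof.
have := ler_norm (a - b); have := normr_ge0 (a - b).
have : b <= Num.max b 0 by rewrite le_max lexx.
have : 0 <= Num.max b 0 by rewrite le_max lexx orbT.
by rewrite ge_max; move=> *; apply/andP; split; lra.
Qed.

(* The cap 1 keeps the set of values nonempty and the envelope at most 1. *)
Definition envelope_values {R : realType} {I : Type} (Q : I -> Prop) (f : I -> R -> R)
    (s : R) : set R :=
  [set r | r = 1 \/ exists2 i, Q i & r = f i s].

Definition envelope {R : realType} {I : Type} (Q : I -> Prop) (f : I -> R -> R)
    (s : R) : R :=
  inf (envelope_values Q f s).

Section Envelope.
Context {R : realType} {I : Type} {Q : I -> Prop} {f : I -> R -> R}.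
Hypothesis f_ge0 : forall i s, Q i -> 0 <= f i s.

Let envelope_values_lbound s : has_lbound (envelope_values Q f s).
Proof. by exists 0 => r [->|[i Qi ->]]; [exact: ler01|exact: f_ge0]. Qed.

Let envelope_values_neq0 s : envelope_values Q f s !=set0.
Proof. by exists 1; left. Qed.

Lemma envelope_le i s : Q i -> envelope Q f s <= f i s.
Proof. by move=> Qi; apply: ge_inf; [exact: envelope_values_lbound|right; exists i]. Qed.

Lemma envelope_le1 s : envelope Q f s <= 1.
Proof. by apply: ge_inf; [exact: envelope_values_lbound|left]. Qed.

Lemma envelope_ge m s : m <= 1 -> (forall i, Q i -> m <= f i s) -> m <= envelope Q f s.
Proof.
move=> m_le1 m_lb; apply: lb_le_inf; first exact: envelope_values_neq0.
by move=> r [->|[i Qi ->]] //; apply: m_lb.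
Qed.

Lemma envelope_ge0 s : 0 <= envelope Q f s.
Proof. by apply: envelope_ge => [|i Qi]; [exact: ler01|exact: f_ge0]. Qed.

Lemma envelope_gt0 m s : 0 < m -> (forall i, Q i -> m <= f i s) -> 0 < envelope Q f s.
Proof.
move=> m_gt0 m_lb; apply: (@lt_le_trans _ _ (Num.min m 1)).
  by rewrite lt_min m_gt0 ltr01.
by apply: envelope_ge => [|i Qi]; rewrite ge_min ?lexx ?orbT ?m_lb.
Qed.

Lemma envelope_lip : (forall i s t, Q i -> f i s <= f i t + `|s - t|) ->
  forall s t, envelope Q f s <= envelope Q f t + `|s - t|.
Proof.
move=> f_lip s t; rewrite -lerBlDr; apply: lb_le_inf; first exact: envelope_values_neq0.
move=> r [->|[i Qi ->]].
  by have := envelope_le1 s; have := normr_ge0 (s - t); lra.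
by have := envelope_le i s Qi; have := f_lip i s t Qi; lra.
Qed.

Lemma envelope_nondecreasing : (forall i s t, Q i -> s <= t -> f i s <= f i t) ->
  forall s t, s <= t -> envelope Q f s <= envelope Q f t.
Proof.
move=> f_mono s t st; apply: lb_le_inf; first exact: envelope_values_neq0.
move=> r [->|[i Qi ->]]; first exact: envelope_le1.
exact: le_trans (envelope_le i s Qi) (f_mono i s t Qi st).
Qed.

Lemma envelope_nonincreasing : (forall i s t, Q i -> s <= t -> f i t <= f i s) ->
  forall s t, s <= t -> envelope Q f t <= envelope Q f s.
Proof.
move=> f_anti s t st; apply: lb_le_inf; first exact: envelope_values_neq0.
move=> r [->|[i Qi ->]]; first exact: envelope_le1.
exact: le_trans (envelope_le i t Qi) (f_anti i s t Qi st).
Qed.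

End Envelope.

Lemma eucl_norm0 {R : realType} {n : nat} : eucl_norm (0 : 'rV[R]_n) = 0.
Proof. by rewrite /eucl_norm big1 ?sqrtr0 // => i _; rewrite mxE expr0n. Qed.

Lemma abs_coord_le_eucl_norm {R : realType} {n : nat} (x : 'rV[R]_n) i :
  `|x ord0 i| <= eucl_norm x.
Proof.
have sqr_sum_ge0 (F : 'I_n -> R) P : 0 <= \sum_(j | P j) F j ^+ 2.
  by apply: sumr_ge0 => j _; exact: sqr_ge0.
rewrite /eucl_norm -sqrtr_sqr ler_sqrt // (bigD1 i) //= lerDl.
exact: sqr_sum_ge0.
Qed.

Section Band.
Context {R : realType} {n : nat} {V W : 'rV[R]_n -> R} {k : R -> R}.
Hypotheses (V_cont : continuous V) (k_Kinf : class_Kinf k).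
Hypothesis k_le_V : forall x, k (eucl_norm x) <= V x.

Lemma eucl_norm_le_of_V_le b s : 0 <= s -> b < k s ->
  forall x, V x <= b -> eucl_norm x <= s.
Proof.
move=> s_ge0 b_lt x Vx_le; rewrite leNgt; apply/negP => s_lt.
by have := proj1 (proj2 (proj2 k_Kinf)) _ _ s_ge0 s_lt; have := k_le_V x; lra.
Qed.

Lemma compact_V_band a b : compact [set x | a <= V x /\ V x <= b].
Proof.
have [s [s_ge0 b_lt]] := proj2 (proj2 (proj2 (proj2 k_Kinf))) b.
have band_closed : closed [set x | a <= V x /\ V x <= b].
  rewrite [X in closed X](_ : _ = V @^-1` [set y | a <= y] `&` V @^-1` [set y | y <= b]) //.
  apply: closedI; apply: preimage_closed.
  - by move=> x _; exact: V_cont.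
  - exact: closed_ge.
  - by move=> x _; exact: V_cont.
  - exact: closed_le.
apply: (subclosed_compact band_closed (@rV_compact _ n (fun=> `[- s, s]%classic) _)).
  by move=> _; exact: segment_compact.
move=> x [_ Vx_le] i /=; rewrite in_itv /= -ler_norml.
apply: (le_trans (abs_coord_le_eucl_norm x i)).
exact: eucl_norm_le_of_V_le s_ge0 b_lt x Vx_le.
Qed.

Hypotheses (W_cont : continuous W) (W_pos_def : pos_def W) (V0_le0 : V 0 <= 0).

Lemma pos_def_lbound_on_V_band a b : 0 < a ->
  exists2 m, 0 < m & forall x, a <= V x -> V x <= b -> m <= W x.
Proof.
move=> a_gt0; set A := [set x | a <= V x /\ V x <= b].
have [[x0 Ax0]|A0] := pselect (A !=set0); last first.
  by exists 1 => // x a_le le_b; exfalso; apply: A0; exists x.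
have [c Ac c_min] := compact_EVT_min (ex_intro _ x0 Ax0) (compact_V_band a b)
  (continuous_subspaceT W_cont).
move: Ac; rewrite inE => -[a_le _].
exists (W c) => [|x a_leVx Vx_le]; last by apply: c_min; rewrite inE.
apply: (proj2 W_pos_def); apply: contraTneq a_le => ->; rewrite -ltNge.
exact: le_lt_trans V0_le0 a_gt0.
Qed.

End Band.

Section Frac1.
Context {R : realFieldType}.
Implicit Types a b : R.

Lemma frac1_ge0 {a} : 0 <= a -> 0 <= a / (1 + a).
Proof. by move=> a_ge0; apply: divr_ge0 => //; lra. Qed.

Lemma frac1_le1 {a} : 0 <= a -> a / (1 + a) <= 1.
Proof. by move=> a_ge0; rewrite ler_pdivrMr; lra. Qed.

Lemma frac1_le {a} : 0 <= a -> a / (1 + a) <= a.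
Proof. by move=> a_ge0; rewrite ler_pdivrMr; nra. Qed.

Lemma frac1_nondecreasing a b : 0 <= a -> a <= b -> a / (1 + a) <= b / (1 + b).
Proof.
move=> a_ge0 ab; rewrite ler_pdivrMr; last lra.
by rewrite mulrAC ler_pdivlMr; nra.
Qed.

End Frac1.

Definition Kc_of {R : realFieldType} (e : R -> R) (s : R) : R := s * (e s / (1 + e s)).

Definition Kd_of {R : realFieldType} (e : R -> R) (s : R) : R := (1 + s) / e s.

Lemma Kc_of_increasing {R : realFieldType} (e : R -> R) :
  (forall s t, s <= t -> e s <= e t) -> (forall s, 0 <= e s) -> (forall s, 0 < s -> 0 < e s) ->
  forall s t, 0 <= s -> s < t -> Kc_of e s < Kc_of e t.
Proof.
move=> e_mono e_ge0 e_gt0 s t s_ge0 st.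
have qt_gt0 : 0 < e t / (1 + e t).
  by apply: divr_gt0; [apply: e_gt0|have := e_ge0 t]; lra.
apply: (@le_lt_trans _ _ (s * (e t / (1 + e t)))).
  by rewrite ler_wpM2l // frac1_nondecreasing // e_mono // ltW.
by rewrite ltr_pM2r.
Qed.

Lemma Kd_of_increasing {R : realFieldType} (e : R -> R) :
  (forall s t, s <= t -> e t <= e s) -> (forall s, 0 < e s) ->
  forall s t, 0 <= s -> s < t -> Kd_of e s < Kd_of e t.
Proof.
move=> e_anti e_gt0 s t s_ge0 st; rewrite /Kd_of ltr_pdivrMr // mulrAC ltr_pdivlMr //.
by have := e_anti s t (ltW st); have := e_gt0 t; nra.
Qed.

Lemma Kc_of_div_Kd_of_le {R : realFieldType} {e1 e2 : R -> R} {s : R} :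
  0 <= s -> 0 <= e1 s -> 0 < e2 s -> e2 s <= 1 ->
  Kc_of e1 s / Kd_of e2 s <= Num.min (e1 s) (e2 s).
Proof.
move=> s_ge0 e1_ge0 e2_gt0 e2_le1; rewrite /Kc_of /Kd_of.
set q := e1 s / (1 + e1 s); set r := s / (1 + s).
have -> : s * q / ((1 + s) / e2 s) = r * q * e2 s.
  by rewrite /r; field; apply/andP; split; rewrite gt_eqF //; lra.
have [r_ge0 r_le1] := (frac1_ge0 s_ge0, frac1_le1 s_ge0).
have [q_ge0 q_le1] := (frac1_ge0 e1_ge0, frac1_le1 e1_ge0).
rewrite le_min; apply/andP; split.
  rewrite mulrAC; apply: le_trans (frac1_le e1_ge0).
  by apply: ler_piMl => //; apply: mulr_ile1 => //; exact: ltW.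
by apply: ler_piMl; [exact: ltW|exact: mulr_ile1].
Qed.

Lemma Kc_of_Kinf {R : realType} (e : R -> R) :
  continuous e -> (forall s t, s <= t -> e s <= e t) ->
  (forall s, 0 <= e s) -> (forall s, 0 < s -> 0 < e s) -> class_Kinf (Kc_of e).
Proof.
move=> e_cont e_mono e_ge0 e_gt0.
split; [|split; [|split; [|split]]].
- apply: continuous_subspaceT => s.
  apply: (@continuousM R R id (fun s => e s / (1 + e s))); first exact: cvg_id.
  apply: (@continuousM R R e (fun s => (1 + e s)^-1)); first exact: e_cont.
  apply: continuousV; first by rewrite gt_eqF //; have := e_ge0 s; lra.
  by apply: (@continuousD R R^o R (fun=> 1) e); [exact: cvg_cst|exact: e_cont].
- by rewrite /Kc_of mul0r.
- exact: Kc_of_increasing.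
- by move=> s s_ge0; apply: mulr_ge0 => //; exact: frac1_ge0.
- move=> M; set q := e 1 / (1 + e 1).
  have q_gt0 : 0 < q by apply: divr_gt0; [apply: e_gt0|have := e_ge0 1]; lra.
  set s := 1 + `|M| / q.
  have s_ge1 : 1 <= s by rewrite lerDl divr_ge0 // ltW.
  exists s; split; first lra.
  have : s * q <= Kc_of e s.
    by rewrite ler_wpM2l ?frac1_nondecreasing ?e_mono //; lra.
  by rewrite /s mulrDl mul1r divfK ?gt_eqF //; have := ler_norm M; lra.
Qed.

Lemma Kd_of_gt0 {R : realFieldType} (e : R -> R) s : 0 <= s -> 0 < e s -> 0 < Kd_of e s.
Proof. by move=> s_ge0 es_gt0; apply: divr_gt0 => //; lra. Qed.

Lemma Kd_of_continuous {R : realType} (e : R -> R) :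
  continuous e -> (forall s, 0 < e s) -> continuous (Kd_of e).
Proof.
move=> e_cont e_gt0 s; apply: (@continuousM R R (fun s => 1 + s) (fun s => (e s)^-1)).
  by apply: (@continuousD R R^o R (fun=> 1) id); [exact: cvg_cst|exact: cvg_id].
by apply: continuousV; [rewrite gt_eqF|exact: e_cont].
Qed.

Definition rhs {R : realType} {n : nat} (tau : R) (W : 'rV[R]_n -> R) x z : R :=
  1/2 * W x + z / (4 * tau).

Definition low_env {R : realType} {n : nat} (tau : R) (W V : 'rV[R]_n -> R) : R -> R :=
  envelope (fun i : 'rV[R]_n * R => 0 <= i.2 /\ V i.1 <= 1)
    (fun i s => rhs tau W i.1 i.2 + Num.max (s - (V i.1 + i.2)) 0).

Definition high_env {R : realType} {n : nat} (tau : R) (W V : 'rV[R]_n -> R) : R -> R :=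
  envelope (fun i : 'rV[R]_n * R => 0 <= i.2 /\ 1 <= V i.1)
    (fun i s => rhs tau W i.1 i.2 + Num.max (V i.1 + i.2 - s) 0).

Section Envelopes.
Context {R : realType} {n : nat} {tau : R} {W V : 'rV[R]_n -> R}.
Hypotheses (tau_gt0 : 0 < tau) (W_ge0 : forall x, 0 <= W x).

Let tau4_gt0 : 0 < 4 * tau. Proof. by rewrite mulr_gt0. Qed.

Lemma rhs_ge0 x z : 0 <= z -> 0 <= rhs tau W x z.
Proof.
move=> z_ge0; apply: addr_ge0; first by apply: mulr_ge0; [lra|exact: W_ge0].
by rewrite divr_ge0 // ltW.
Qed.

Let low_ge0 (i : 'rV[R]_n * R) s : 0 <= i.2 /\ V i.1 <= 1 ->
  0 <= rhs tau W i.1 i.2 + Num.max (s - (V i.1 + i.2)) 0.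
Proof. by move=> [z_ge0 _]; apply: addr_ge0; rewrite ?rhs_ge0 // le_max lexx orbT. Qed.

Let high_ge0 (i : 'rV[R]_n * R) s : 0 <= i.2 /\ 1 <= V i.1 ->
  0 <= rhs tau W i.1 i.2 + Num.max (V i.1 + i.2 - s) 0.
Proof. by move=> [z_ge0 _]; apply: addr_ge0; rewrite ?rhs_ge0 // le_max lexx orbT. Qed.

Lemma low_env_continuous : continuous (low_env tau W V).
Proof.
apply: lip1_continuous; apply: (envelope_lip low_ge0) => i s t _.
have := max0_lip (s - (V i.1 + i.2)) (t - (V i.1 + i.2)).
have -> : s - (V i.1 + i.2) - (t - (V i.1 + i.2)) = s - t by ring.
lra.
Qed.

Lemma high_env_continuous : continuous (high_env tau W V).
Proof.
apply: lip1_continuous; apply: (envelope_lip high_ge0) => i s t _.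
have := max0_lip (V i.1 + i.2 - s) (V i.1 + i.2 - t).
have -> : V i.1 + i.2 - s - (V i.1 + i.2 - t) = - (s - t) by ring.
rewrite normrN; lra.
Qed.

Lemma low_env_nondecreasing s t : s <= t -> low_env tau W V s <= low_env tau W V t.
Proof.
apply: (envelope_nondecreasing low_ge0) => i {}s {}t _ st.
by rewrite lerD2l; apply: le_max2; rewrite ?lerD2r.
Qed.

Lemma high_env_nonincreasing s t : s <= t -> high_env tau W V t <= high_env tau W V s.
Proof.
apply: (envelope_nonincreasing high_ge0) => i {}s {}t _ st.
by rewrite lerD2l; apply: le_max2; rewrite ?lerD2l ?lerN2.
Qed.

Lemma low_env_ge0 s : 0 <= low_env tau W V s.
Proof. exact: envelope_ge0 low_ge0 s. Qed.

Lemma high_env_le1 s : high_env tau W V s <= 1.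
Proof. exact: envelope_le1 high_ge0 s. Qed.

Lemma low_env_le_rhs x z : 0 <= z -> V x <= 1 -> low_env tau W V (V x + z) <= rhs tau W x z.
Proof.
move=> z_ge0 Vx_le1.
by have := envelope_le low_ge0 (x, z) (V x + z) (conj z_ge0 Vx_le1); rewrite /= subrr maxxx addr0.
Qed.

Lemma high_env_le_rhs x z : 0 <= z -> 1 <= V x -> high_env tau W V (V x + z) <= rhs tau W x z.
Proof.
move=> z_ge0 Vx_ge1.
by have := envelope_le high_ge0 (x, z) (V x + z) (conj z_ge0 Vx_ge1); rewrite /= subrr maxxx addr0.
Qed.

Hypothesis W_lbound_on_V_band : forall a b, 0 < a ->
  exists2 m, 0 < m & forall x, a <= V x -> V x <= b -> m <= W x.

Lemma low_env_gt0 s : 0 < s -> 0 < low_env tau W V s.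
Proof.
move=> s_gt0; have [m m_gt0 W_ge_m] := W_lbound_on_V_band (s / 2) 1 ltac:(lra).
have s_tau_gt0 : 0 < s / 4 / (4 * tau) by rewrite !divr_gt0.
rewrite /low_env; apply: (envelope_gt0 (Num.min (m / 2) (Num.min (s / 4) (s / 4 / (4 * tau))))).
  by rewrite !lt_min s_tau_gt0 andbT divr_gt0 //=; lra.
move=> [x z] [/= z_ge0 Vx_le1]; rewrite /rhs.
have [pen_ge0 pen_ge] : 0 <= Num.max (s - (V x + z)) 0 /\ s - (V x + z) <= Num.max (s - (V x + z)) 0.
  by rewrite !le_max !lexx orbT.
have z_tau_ge0 : 0 <= z / (4 * tau) by rewrite divr_ge0 // ltW.
have Wx_ge0 := W_ge0 x.
rewrite !ge_min; have [s_le_Vx|Vx_lt_s] := leP (s / 2) (V x).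
  by apply/orP; left; have := W_ge_m x s_le_Vx Vx_le1; lra.
have [z_le|z_gt] := leP z (s / 4).
  by apply/orP; right; apply/orP; left; lra.
apply/orP; right; apply/orP; right.
have : s / 4 / (4 * tau) <= z / (4 * tau) by rewrite ler_pM2r ?invr_gt0 //; lra.
lra.
Qed.

Lemma high_env_gt0 s : 0 < high_env tau W V s.
Proof.
have [m m_gt0 W_ge_m] := W_lbound_on_V_band 1 (s + 1) ltr01.
rewrite /high_env; apply: (envelope_gt0 (Num.min (m / 2) 1)).
  by rewrite lt_min ltr01 andbT divr_gt0.
move=> [x z] [/= z_ge0 Vx_ge1]; rewrite /rhs.
have [pen_ge0 pen_ge] : 0 <= Num.max (V x + z - s) 0 /\ V x + z - s <= Num.max (V x + z - s) 0.
  by rewrite !le_max !lexx orbT.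
have z_tau_ge0 : 0 <= z / (4 * tau) by rewrite divr_ge0 // ltW.
have Wx_ge0 := W_ge0 x.
rewrite ge_min; have [Vx_le|Vx_gt] := leP (V x) (s + 1).
  by apply/orP; left; have := W_ge_m x Vx_ge1 Vx_le; lra.
by apply/orP; right; lra.
Qed.

End Envelopes.

Theorem lemma2 (R : realType) (n : nat) (tau : R) (W V : 'rV[R]_n -> R)
  (k1 k2 : R -> R) :
  0 < tau ->
  continuous W -> pos_def W ->
  continuous V -> class_Kinf k1 -> class_Kinf k2 ->
  (forall x, k1 (eucl_norm x) <= V x <= k2 (eucl_norm x)) ->
  exists Kc Kd : R -> R,
    class_Kinf Kc /\
    (forall s, 0 <= s -> 0 < Kd s) /\
    {within `[0, +oo[, continuous Kd} /\
    (forall s t, 0 <= s -> s < t -> Kd s < Kd t) /\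
    (forall x (z : R), 0 <= z ->
       Kc (V x + z) / Kd (V x + z) <= 1/2 * W x + z / (4 * tau)).
Proof.
move=> tau_gt0 W_cont W_pd V_cont k1_Kinf k2_Kinf V_bounds.
have W_ge0 x : 0 <= W x.
  by have [->|/(proj2 W_pd)/ltW //] := eqVneq x 0; rewrite (proj1 W_pd).
have k1_le_V x : k1 (eucl_norm x) <= V x by case/andP: (V_bounds x).
have V_ge0 x : 0 <= V x.
  by apply: le_trans (k1_le_V x); apply: (proj1 (proj2 (proj2 (proj2 k1_Kinf)))); exact: sqrtr_ge0.
have V0_le0 : V 0 <= 0.
  by case/andP: (V_bounds 0) => _; rewrite eucl_norm0 (proj1 (proj2 k2_Kinf)).
have W_band := pos_def_lbound_on_V_band V_cont k1_Kinf k1_le_V W_cont W_pd V0_le0.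
have e2_gt0 := high_env_gt0 tau_gt0 W_ge0 W_band.
exists (Kc_of (low_env tau W V)), (Kd_of (high_env tau W V)).
split; [|split; [|split; [|split]]].
- apply: Kc_of_Kinf; [exact: low_env_continuous|exact: low_env_nondecreasing|
                      exact: low_env_ge0|exact: low_env_gt0].
- by move=> s s_ge0; apply: Kd_of_gt0.
- by apply: continuous_subspaceT; apply: Kd_of_continuous => //; exact: high_env_continuous.
- by apply: Kd_of_increasing => //; exact: high_env_nonincreasing.
- move=> x z z_ge0; have s_ge0 : 0 <= V x + z by rewrite addr_ge0.
  apply: le_trans (Kc_of_div_Kd_of_le s_ge0 (low_env_ge0 tau_gt0 W_ge0 _) (e2_gt0 _)
    (high_env_le1 tau_gt0 W_ge0 _)) _.
  rewrite ge_min; have [Vx_le1|/ltW Vx_ge1] := leP (V x) 1.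
  + by rewrite low_env_le_rhs.
  + by rewrite high_env_le_rhs ?orbT.
Qed.
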